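(* Let $n\ge 3$ and let $A_1\ldots A_n$ be a regular $n$-gon in the coordinate plane. Let $f(x)$ be a real polynomial of degree $n$ whose roots, counted with multiplicity, are the abscissas of $A_1,\ldots,A_n$ (i.e. $f(x)=c\prod_{j=1}^n (x-x(A_j))$, $c\neq 0$). Then every root of $f$ has multiplicity at most $2$, $f'$ has $n-1$ distinct real roots, and if $l_1,\ldots,l_{n-1}$ are the vertical lines through these roots, then the leftmost and the rightmost of these lines are tangent to the circle inscribed in $A_1\ldots A_n$. Equivalently, if $O=(o,\cdot)$ is the center and $r$ the inradius of the polygon, then the smallest root of $f'$ is $o-r$ and the largest is $o+r$.
   Context: ''Vertical'' means parallel to the ordinate axis; $x(P)$ denotes the abscissa of a point $P$. *)

From HB Require Import structures.
From mathcomp Require Import all_boot all_order all_algebra.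
From mathcomp Require Import all_classical all_reals all_analysis.
Set Implicit Arguments. Unset Strict Implicit. Unset Printing Implicit Defensive.
Import Order.TTheory GRing.Theory Num.Theory.
Local Open Scope ring_scope.

(* A regular n-gon A_0 ... A_{n-1} (vertices listed in cyclic order, either
   orientation) with center O, circumradius rho > 0 and initial angle theta:
   A_j = O + rho (cos (theta + eps 2 pi j / n), sin (theta + eps 2 pi j / n)),
   eps = +1 or -1. *)
Definition regular_ngon_with (R : realType) (n : nat) (A : 'I_n -> R * R)
    (O : R * R) (rho theta : R) : Prop :=
  0 < rho /\
  exists eps : R, (eps = 1 \/ eps = -1) /\
  forall j : 'I_n,
    A j = (O.1 + rho * cos (theta + eps * (2 * pi * (j%:R) / n%:R)),
           O.2 + rho * sin (theta + eps * (2 * pi * (j%:R) / n%:R))).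

Definition regular_ngon (R : realType) (n : nat) (A : 'I_n -> R * R) : Prop :=
  exists (O : R * R) (rho theta : R), regular_ngon_with A O rho theta.

From HB Require Import structures.
From mathcomp Require Import all_boot all_order all_algebra.
From mathcomp Require Import all_classical all_reals all_analysis.
From mathcomp Require Import complex.
From mathcomp Require polyorder.
From mathcomp Require Import ring lra.
Import Order.TTheory GRing.Theory Num.Theory.
Local Open Scope ring_scope.

(* Write the abscissas of the vertices as o + rho cos phi_j with
   phi_j = theta + eps 2 pi j / n.  Factoring z^n - u^n over the n-th roots of
   unity (in R[i], with z = e^{it}, u = e^{i theta}) turns f into a scaled
   Chebyshev polynomial:
     f(o + rho cos t) = c (rho/2)^n (2 cos(n t) - 2 cos(n theta)).
   Differentiating in t gives
     f'(o + rho cos t) rho sin t = 2 c (rho/2)^n n sin(n t),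
   so the n - 1 distinct points o + rho cos(k pi / n), 0 < k < n, are roots
   of f'.
   As f' has degree n - 1 these are all its roots and they are simple, whence no
   root of f has multiplicity 3.  The extreme ones, k = 1 and k = n - 1, are
   o +- rho cos(pi / n), and rho cos(pi / n) is the inradius. *)

Section ComplexExponential.
Context {R : realType}.
Implicit Types a t y : R.

Definition expi t : R[i] := (cos t +i* sin t)%C.

Lemma expiD a t : expi (a + t) = expi a * expi t.
Proof.
by rewrite /expi; simpc; rewrite cosD sinD; congr (_ +i* _)%C; rewrite addrC.
Qed.

Lemma expi0 : expi 0 = 1.
Proof. by rewrite /expi cos0 sin0. Qed.

Lemma expiX t k : expi t ^+ k = expi (k%:R * t).
Proof.
elim: k => [|k IHk]; first by rewrite expr0 mul0r expi0.
by rewrite exprS IHk -expiD mulrS mulrDl mul1r.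
Qed.

Lemma expiN t : expi (- t) = (expi t)^-1.
Proof. by apply/esym/mulr1_eq; rewrite -expiD subrr expi0. Qed.

Lemma expi_neq0 t : expi t != 0.
Proof.
apply/eqP => t0; have := expiD t (- t).
by rewrite subrr expi0 t0 mul0r; apply/eqP; rewrite oner_eq0.
Qed.

Lemma expiDV t : expi t + (expi t)^-1 = (2 * cos t)%:C%C.
Proof. by rewrite -expiN /expi cosN sinN; simpc; rewrite mulr_natl mulr2n. Qed.

Lemma cos_lt1 y : 0 < y < pi *+ 2 -> cos y < 1.
Proof.
move=> /andP[y_gt0 y_lt2pi].
have -> : y = (y / 2) *+ 2 by rewrite mulr2n; field.
have : 0 < sin (y / 2).
  by apply: sin_gt0_pi; rewrite divr_gt0 //= ltr_pdivrMr // mulr_natr.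
rewrite cos_mulr2n cos2sin2 => s_gt0.
have : 0 < sin (y / 2) ^+ 2 by rewrite exprn_gt0.
lra.
Qed.

Lemma prim_root_expi n eps : (0 < n)%N -> eps = 1 \/ eps = -1 ->
  n.-primitive_root (expi (eps * (2 * pi / n%:R))).
Proof.
move=> n_gt0 eps_pm; have n_neq0 : n%:R != 0 :> R by rewrite pnatr_eq0 -lt0n.
have cos_eps y : cos (eps * y) = cos y.
  by case: eps_pm => ->; rewrite ?mul1r ?mulN1r ?cosN.
apply/andP; split=> //; apply/forallP => i; apply/eqP.
rewrite unity_rootE expiX.
have -> : i.+1%:R * (eps * (2 * pi / n%:R)) = eps * (pi *+ 2 * (i.+1%:R / n%:R)).
  by rewrite mulr2n; field.
have [-> | i1_neq_n] := eqVneq i.+1 n.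
  rewrite divff // mulr1; apply/eqP.
  by case: eps_pm => ->;
    rewrite ?mul1r ?mulN1r /expi ?sinN ?cosN cos2pi sin2pi ?oppr0.
apply/negbTE/eqP => /(congr1 (@complex.Re R)) /= cos_eq1.
have : cos (pi *+ 2 * (i.+1%:R / n%:R)) < 1 :> R.
  have two_pi_gt0 : 0 < pi *+ 2 :> R by rewrite mulrn_wgt0 // pi_gt0.
  apply: cos_lt1; rewrite mulr_gt0 ?divr_gt0 ?ltr0n //=.
  rewrite gtr_pMr // ltr_pdivrMr ?ltr0n // mul1r ltr_nat.
  by rewrite ltn_neqAle i1_neq_n ltn_ord.
by rewrite -cos_eps cos_eq1 ltxx.
Qed.

End ComplexExponential.

Section PrimitiveRootProducts.
Context {F : fieldType} {n : nat}.

Lemma prod_sub_prim_root (w v z : F) : n.-primitive_root w ->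
  \prod_(i < n) (z - v * w ^+ i) = z ^+ n - v ^+ n.
Proof.
move=> w_prim; have n_gt0 := prim_order_gt0 w_prim.
have [-> | v_neq0] := eqVneq v 0.
  under eq_bigr do rewrite mul0r subr0.
  by rewrite prodr_const card_ord expr0n gtn_eqF // subr0.
have /(congr1 (horner ^~ (z / v))) := factor_Xn_sub_1 w_prim.
rewrite horner_prod big_mkord !hornerE => prod_eq.
have scale i : z - v * w ^+ i = v * ('X - (w ^+ i)%:P).[z / v].
  by rewrite hornerXsubC mulrBr mulrCA divff // mulr1.
under eq_bigr do rewrite scale.
rewrite big_split /= prodr_const card_ord prod_eq mulrBr mulr1 exprMn exprVn.
by rewrite mulrCA divff ?mulr1 // expf_neq0.
Qed.

Lemma prod_sub_addV_prim_root (w w' u z : F) : n.-primitive_root w ->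
  n.-primitive_root w' -> w * w' = 1 -> z != 0 -> u != 0 ->
  \prod_(i < n) ((z + z^-1) - (u * w ^+ i + (u * w ^+ i)^-1)) =
  (z ^+ n + (z ^+ n)^-1) - (u ^+ n + (u ^+ n)^-1).
Proof.
move=> w_prim w'_prim ww' z_neq0 u_neq0.
have w_neq0 : w != 0.
  by apply: contra_eq_neq ww' => ->; rewrite mul0r eq_sym oner_neq0.
have factor i : (z + z^-1) - (u * w ^+ i + (u * w ^+ i)^-1) =
    z^-1 * ((z - u * w ^+ i) * (z - u^-1 * w' ^+ i)).
  have uw_neq0 : u * w ^+ i != 0 by rewrite mulf_neq0 // expf_neq0.
  rewrite -(mulr1_eq ww') exprVn -invfM.
  by move: (u * w ^+ i) uw_neq0 => x x_neq0; field; rewrite x_neq0 z_neq0.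
under eq_bigr do rewrite factor.
rewrite !big_split /= prodr_const card_ord !prod_sub_prim_root // !exprVn.
have zn_neq0 : z ^+ n != 0 by rewrite expf_neq0.
have un_neq0 : u ^+ n != 0 by rewrite expf_neq0.
move: (z ^+ n) (u ^+ n) zn_neq0 un_neq0 => Z U Z_neq0 U_neq0.
by field; rewrite Z_neq0 U_neq0.
Qed.

End PrimitiveRootProducts.

Lemma prod_sub_cos {R : realType} (n : nat) (theta eps t : R) :
  (0 < n)%N -> eps = 1 \/ eps = -1 ->
  \prod_(j < n) (2 * cos t - 2 * cos (theta + eps * (2 * pi * j%:R / n%:R))) =
  2 * cos (n%:R * t) - 2 * cos (n%:R * theta).
Proof.
move=> n_gt0 eps_pm; apply: (@complexI R); rewrite rmorph_prod rmorphB /=.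
set w := expi (eps * (2 * pi / n%:R)).
set w' := expi (- eps * (2 * pi / n%:R)).
have w_prim : n.-primitive_root w by apply: prim_root_expi.
have w'_prim : n.-primitive_root w'.
  by apply: prim_root_expi => //; case: eps_pm => ->; rewrite ?opprK; [right|left].
have ww' : w * w' = 1 by rewrite -expiD mulNr subrr expi0.
rewrite -!expiDV -!expiX.
rewrite -(prod_sub_addV_prim_root _ _ _ _ w_prim w'_prim ww') ?expi_neq0 //.
apply: eq_bigr => j _; rewrite rmorphB /= -expiDV expiX -expiD.
have -> : j%:R * (eps * (2 * pi / n%:R)) = eps * (2 * pi * j%:R / n%:R) by ring.
by rewrite -expiDV.
Qed.

Section PolynomialsOfCosine.
Context {R : realType}.

Lemma sin_natrMpi k : sin (k%:R * pi) = 0 :> R.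
Proof.
by rewrite mulr_natl -[_ *+ _]add0r (alternatingn (@sinDpi R)) sin0 mulr0.
Qed.

Lemma derivable1_comp (f g : R -> R) x :
  derivable f x 1 -> derivable g (f x) 1 -> derivable (g \o f) x 1.
Proof.
move=> /derivable1_diffP df /derivable1_diffP dg.
exact/derivable1_diffP/differentiable_comp.
Qed.

Lemma derive1_horner_cos (p : {poly R}) t :
  (horner p \o cos)^`()%classic t = - (p^`().[cos t] * sin t).
Proof.
rewrite derive1_comp ?derivE; [|exact: derivable_cos|exact: derivable_horner].
by rewrite [cos^`()%classic t]derive1E derive_val mulrN.
Qed.

Lemma horner_deriv_cos (p : {poly R}) (a b : R) (n : nat) :
  (forall t, p.[cos t] = a * cos (n%:R * t) + b) ->
  forall t, p^`().[cos t] * sin t = a * n%:R * sin (n%:R * t).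
Proof.
move=> p_cos t.
pose q : {poly R} := a *: 'X + b%:P.
pose m : {poly R} := n%:R *: 'X.
have p_cos_comp : horner p \o cos = (horner q \o cos) \o horner m.
  by apply/funext => y /=; rewrite p_cos /q /m !hornerE.
have := congr1 (fun g => g^`()%classic t) p_cos_comp => /=.
rewrite derive1_horner_cos derive1_comp; last first.
- by apply: derivable1_comp; [exact: derivable_cos|exact: derivable_horner].
- exact: derivable_horner.
rewrite derive1_horner_cos -!derivE /q /m derivD !derivZ derivC derivX addr0.
by rewrite !hornerE => eq_deriv; apply: oppr_inj; rewrite eq_deriv /=; ring.
Qed.
End PolynomialsOfCosine.

Section RootMultiplicities.
Context {F : fieldType}.
Implicit Types (p : {poly F}) (x : F).

Lemma dvdp_deriv_XsubCX p x k :
  ('X - x%:P) ^+ k.+1 %| p -> ('X - x%:P) ^+ k %| p^`().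
Proof.
move=> /dvdpP[q ->]; rewrite derivM deriv_exp derivXsubC mul1r /=.
rewrite dvdp_add // dvdp_mull //; last by rewrite -mulr_natr dvdp_mulIl.
by rewrite exprS dvdp_mull.
Qed.

Lemma mup_leqS_deriv p x : p^`() != 0 -> (mup x p <= (mup x p^`()).+1)%N.
Proof.
move=> p'_neq0.
have p_neq0 : p != 0 by apply: contra_neq p'_neq0 => ->; rewrite deriv0.
rewrite mup_leq //; apply: contraNN (@dvdp_deriv_XsubCX p x _) _.
by rewrite -mup_ltn.
Qed.

Section FullRootSeq.
Variables (p : {poly F}) (s : seq F).
Hypotheses (size_p : size p = (size s).+1) (p_s : all (root p) s) (s_uniq : uniq s).

Let p_prod : p = lead_coef p *: \prod_(y <- s) ('X - y%:P).
Proof. by apply: all_roots_prod_XsubC; rewrite ?uniq_rootsE. Qed.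

Let lc_neq0 : lead_coef p != 0.
Proof. by rewrite lead_coef_eq0 -size_poly_eq0 size_p. Qed.

Lemma full_roots_rootE x : root p x = (x \in s).
Proof. by rewrite p_prod rootZ // root_prod_XsubC. Qed.

Lemma full_roots_mup_leq1 x : (mup x p <= 1)%N.
Proof.
rewrite p_prod -mul_polyC mupMr ?rootC // mu_prod_XsubC.
by rewrite count_uniq_mem // leq_b1.
Qed.

End FullRootSeq.
End RootMultiplicities.

Section ChebyshevExtrema.
Context {R : realType}.
Variables (n : nat) (o rho : R).
Hypotheses (n_gt1 : (1 < n)%N) (rho_gt0 : 0 < rho).

Definition cheb_extrema : seq R :=
  [seq o + rho * cos (k%:R * pi / n%:R) | k <- iota 1 n.-1].

Let n_gt0 : (0 < n)%N. Proof. exact: ltnW. Qed.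
Let n_pos : 0 < n%:R :> R. Proof. by rewrite ltr0n. Qed.

Let angle_in_0pi {k} : (k <= n)%N -> k%:R * pi / n%:R \in `[0, pi : R].
Proof.
move=> k_le_n; rewrite in_itv /= divr_ge0 ?mulr_ge0 ?pi_ge0 //=.
by rewrite ler_pdivrMr // [pi * _]mulrC ler_pM2r ?pi_gt0 // ler_nat.
Qed.

Let ler_cos_angle k l : (k <= n)%N -> (l <= n)%N ->
  (cos (k%:R * pi / n%:R) <= cos (l%:R * pi / n%:R) :> R) = (l <= k)%N.
Proof.
move=> k_le_n l_le_n; rewrite leNgt ltr_cos ?angle_in_0pi // -leNgt.
by rewrite ler_pM2r ?invr_gt0 ?ltr0n // (ler_pM2r (@pi_gt0 R)) ler_nat.
Qed.

Let mem_iota_interior k : (k \in iota 1 n.-1) = (0 < k < n)%N.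
Proof. by rewrite mem_iota add1n prednK. Qed.

Lemma size_cheb_extrema : size cheb_extrema = n.-1.
Proof. by rewrite size_map size_iota. Qed.

Lemma uniq_cheb_extrema : uniq cheb_extrema.
Proof.
rewrite map_inj_in_uniq ?iota_uniq // => k l.
rewrite !mem_iota_interior => /andP[_ /ltnW k_le_n] /andP[_ /ltnW l_le_n].
move=> /addrI /(mulfI (lt0r_neq0 rho_gt0)) /cos_inj.
move=> /(_ (angle_in_0pi k_le_n) (angle_in_0pi l_le_n)).
move=> /(mulIf (invr_neq0 (lt0r_neq0 n_pos))).
by move=> /(mulIf (lt0r_neq0 (@pi_gt0 R))) /eqP; rewrite eqr_nat => /eqP.
Qed.

Lemma cheb_extremaP x :
  reflect (exists2 k, (0 < k < n)%N & x = o + rho * cos (k%:R * pi / n%:R))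
          (x \in cheb_extrema).
Proof.
apply: (iffP mapP) => [[k] | [k]]; rewrite ?mem_iota_interior => k_int ->.
  by exists k.
by exists k; rewrite ?mem_iota_interior.
Qed.

Lemma cheb_extrema_first : o + rho * cos (pi / n%:R) \in cheb_extrema.
Proof. by apply/cheb_extremaP; exists 1%N; rewrite ?n_gt1 ?mul1r. Qed.

Let cos_last : cos (n.-1%:R * pi / n%:R) = - cos (pi / n%:R) :> R.
Proof.
have -> : n.-1%:R * pi / n%:R = pi - pi / n%:R :> R.
  by rewrite -subn1 natrB //; field; exact: lt0r_neq0.
by rewrite cosB cospi sinpi mul0r addr0 mulN1r.
Qed.

Lemma cheb_extrema_last : o - rho * cos (pi / n%:R) \in cheb_extrema.
Proof.
apply/cheb_extremaP; exists n.-1; first by rewrite ltn_predRL n_gt1 ltn_predL.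
by rewrite cos_last mulrN.
Qed.

Lemma cheb_extrema_bounds x : x \in cheb_extrema ->
  o - rho * cos (pi / n%:R) <= x <= o + rho * cos (pi / n%:R).
Proof.
move=> /cheb_extremaP[k /andP[k_gt0 k_lt_n] ->].
rewrite -mulrN -cos_last !lerD2l !ler_pM2l //; apply/andP; split.
  by rewrite (ler_cos_angle _ _ (leq_pred n) (ltnW k_lt_n)) -ltnS prednK.
by have := ler_cos_angle k 1 (ltnW k_lt_n) (ltnW n_gt1); rewrite mul1r k_gt0.
Qed.

End ChebyshevExtrema.

Section AbscissaPolynomial.
Context {R : realType}.
Context {n : nat} {o rho theta eps c : R} {f : {poly R}}.
Hypotheses (n_gt1 : (1 < n)%N) (rho_gt0 : 0 < rho) (eps_pm : eps = 1 \/ eps = -1).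
Hypotheses (c_neq0 : c != 0) (f_def : f = c *: \prod_(j < n)
  ('X - (o + rho * cos (theta + eps * (2 * pi * j%:R / n%:R)))%:P)).

Let n_gt0 : (0 < n)%N. Proof. exact: ltnW. Qed.

Let a := c * (rho / 2) ^+ n * 2.

Lemma abscissa_poly_cos t :
  f.[o + rho * cos t] = a * cos (n%:R * t) - a * cos (n%:R * theta).
Proof.
transitivity (c * ((rho / 2) ^+ n *
    (2 * cos (n%:R * t) - 2 * cos (n%:R * theta)))); last by rewrite /a; ring.
rewrite f_def hornerZ horner_prod -(prod_sub_cos n theta eps t n_gt0 eps_pm).
have -> : (rho / 2) ^+ n = \prod_(j < n) (rho / 2) by rewrite prodr_const card_ord.
rewrite -big_split /=; congr (_ * _); apply: eq_bigr => j _.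
by rewrite hornerXsubC; field.
Qed.

Lemma deriv_abscissa_poly_cos t :
  f^`().[o + rho * cos t] * rho * sin t = a * n%:R * sin (n%:R * t).
Proof.
pose q : {poly R} := o%:P + rho *: 'X.
have g_cos s :
    (f \Po q).[cos s] = a * cos (n%:R * s) + - (a * cos (n%:R * theta)).
  by rewrite horner_comp /q !hornerE abscissa_poly_cos.
rewrite -(horner_deriv_cos _ _ _ _ g_cos) deriv_comp /q.
rewrite derivD derivC derivZ derivX.
by rewrite add0r hornerM horner_comp !hornerE /= mulr1.
Qed.

Lemma size_abscissa_poly : size f = n.+1.
Proof.
rewrite f_def size_scale // size_prod_XsubC.
by rewrite [index_enum _]unlock -enumT -cardT card_ord.
Qed.

Lemma size_deriv_abscissa_poly : size f^`() = (size (cheb_extrema n o rho)).+1.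
Proof.
by rewrite polyorder.size_deriv size_abscissa_poly size_cheb_extrema prednK.
Qed.

Lemma root_deriv_abscissa_poly : all (root f^`()) (cheb_extrema n o rho).
Proof.
apply/allP => _ /(cheb_extremaP _ _ _ n_gt1)[k /andP[k_gt0 k_lt_n] ->].
have := deriv_abscissa_poly_cos (k%:R * pi / n%:R).
have -> : n%:R * (k%:R * pi / n%:R) = k%:R * pi :> R.
  by field; rewrite pnatr_eq0 -lt0n.
rewrite sin_natrMpi mulr0 => /eqP; rewrite !mulf_eq0 (gt_eqF rho_gt0) orbF.
have -> : (sin (k%:R * pi / n%:R) == 0 :> R) = false.
  apply: gt_eqF; apply: sin_gt0_pi; rewrite divr_gt0 ?mulr_gt0 ?ltr0n ?pi_gt0 //=.
  by rewrite ltr_pdivrMr ?ltr0n // [pi * _]mulrC ltr_pM2r ?pi_gt0 // ltr_nat.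
by rewrite orbF.
Qed.

Lemma deriv_abscissa_poly_neq0 : f^`() != 0.
Proof. by rewrite -size_poly_eq0 size_deriv_abscissa_poly. Qed.

Lemma root_deriv_abscissa_polyE x :
  root f^`() x = (x \in cheb_extrema n o rho).
Proof.
apply: full_roots_rootE; first exact: size_deriv_abscissa_poly.
  exact: root_deriv_abscissa_poly.
exact: uniq_cheb_extrema.
Qed.

Lemma mup_abscissa_poly_leq2 x : (mup x f <= 2)%N.
Proof.
apply: leq_trans (mup_leqS_deriv f x deriv_abscissa_poly_neq0) _.
rewrite ltnS; apply: full_roots_mup_leq1; first exact: size_deriv_abscissa_poly.
  exact: root_deriv_abscissa_poly.
exact: uniq_cheb_extrema.
Qed.

End AbscissaPolynomial.

Theorem theorem1 (R : realType) (n : nat) (hn : (3 <= n)%N)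
    (A : 'I_n -> R * R) (O : R * R) (rho theta : R)
    (hA : regular_ngon_with A O rho theta)
    (f : {poly R}) (c : R) (hc : c != 0)
    (hf : f = c *: \prod_(j < n) ('X - ((A j).1)%:P)) :
  let r := rho * cos (pi / n%:R) in
  (forall x : R, (mup x f <= 2)%N) /\
  exists s : seq R,
    [/\ uniq s, size s = n.-1,
        (forall x : R, root f^`() x <-> x \in s),
        O.1 - r \in s /\ O.1 + r \in s &
        (forall x, x \in s -> O.1 - r <= x <= O.1 + r)].
Proof.
move=> r; case: hA => rho_gt0 [eps [eps_pm A_def]].
have n_gt1 : (1 < n)%N by apply: leq_trans hn.
have f_def : f = c *: \prod_(j < n)
    ('X - (O.1 + rho * cos (theta + eps * (2 * pi * j%:R / n%:R)))%:P).
  by rewrite hf; under eq_bigr do rewrite A_def.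
split=> [x|]; first exact: (mup_abscissa_poly_leq2 n_gt1 rho_gt0 eps_pm hc f_def).
exists (cheb_extrema n O.1 rho); split.
- exact: uniq_cheb_extrema.
- exact: size_cheb_extrema.
- by move=> x; rewrite (root_deriv_abscissa_polyE n_gt1 rho_gt0 eps_pm hc f_def).
- by split; [exact: cheb_extrema_last | exact: cheb_extrema_first].
- exact: cheb_extrema_bounds.
Qed.
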